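(* Let $1<n\leq m$ be integers. Then (1) $d(u^{(0)},0)=\binom{\lfloor\frac{m+n}{2}\rfloor+1}{2}+\binom{\lceil\frac{m-n}{2}\rceil+1}{2}$; (2) if moreover $n<m$ and $2\nmid(m-n)$, then $d(u^{(1)},0)=\binom{\lceil\frac{m+n}{2}\rceil+1}{2}+\binom{\lfloor\frac{m-n}{2}\rfloor+1}{2}-\lceil\frac{m+1}{2}\rceil$.
   Context: Elements of $\mathbb{Z}_n$ are identified with representatives in $\{0,\dots,n-1\}$. The dYoke graph $Z_{n,m}$ has vertices $u=(u_0,\dots,u_{m+1})\in\mathbb{Z}_n\times\{-1,0,1\}^m\times\mathbb{Z}_n$ with $\sum u_i\equiv0\pmod n$; $u,v$ adjacent if there is $0\leq i\leq m$ with $u_j=v_j$ for $j\notin\{i,i+1\}$ and either ($u_i=v_i+1$, $u_{i+1}=v_{i+1}-1$) or ($u_i=v_i-1$, $u_{i+1}=v_{i+1}+1$), arithmetic in coordinates $0,m+1$ in $\mathbb{Z}_n$. $d$ is graph distance, $0$ the all-zero vertex. $u^{(0)}$ is the vertex with $u_i=1$ for $1\le i\le m$ and $u_0\equiv-\lfloor\frac{m-n}{2}\rfloor\pmod n$ ($u_{m+1}$ determined by the sum condition). For $n<m$ with $m-n$ odd, $u^{(1)}$ is the vertex with $u_{\lceil(m+1)/2\rceil}=0$, $u_i=1$ for all other $1\le i\le m$, and $u_0\equiv-\lfloor\frac{m-n}{2}\rfloor\pmod n$. *)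

From mathcomp Require Import all_boot all_order all_algebra.
Set Implicit Arguments. Unset Strict Implicit. Unset Printing Implicit Defensive.
Import Order.TTheory GRing.Theory Num.Theory.
Local Open Scope ring_scope.

(* A candidate vertex of Z_{n,m}: coordinates u_0, ..., u_{m+1}, stored as
   integers; end coordinates are representatives in {0,...,n-1}. *)
Definition vtx (m : nat) := {ffun 'I_m.+2 -> int}.

Definition is_end (m : nat) (j : 'I_m.+2) : bool :=
  (val j == 0%N) || (val j == m.+1).

Definition valid (n m : nat) (u : vtx m) : Prop :=
  (forall j : 'I_m.+2,
      if is_end j then (0 <= u j) /\ (u j < n%:Z)
      else u j \in [:: -1; 0; 1]) /\
  ((\sum_(j < m.+2) u j) %% n%:Z)%Z = 0.

Definition ceq (n m : nat) (j : 'I_m.+2) (x y : int) : Prop :=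
  if is_end j then (x %% n%:Z)%Z = (y %% n%:Z)%Z else x = y.

Definition adj (n m : nat) (u v : vtx m) : Prop :=
  valid n u /\ valid n v /\
  exists i : nat, (i <= m)%N /\
    (forall j : 'I_m.+2, val j <> i -> val j <> i.+1 -> u j = v j) /\
    (( (forall j : 'I_m.+2, val j = i -> ceq n j (u j) (v j + 1)) /\
       (forall j : 'I_m.+2, val j = i.+1 -> ceq n j (u j) (v j - 1)) ) \/
     ( (forall j : 'I_m.+2, val j = i -> ceq n j (u j) (v j - 1)) /\
       (forall j : 'I_m.+2, val j = i.+1 -> ceq n j (u j) (v j + 1)) )).

Inductive walk (n m : nat) : vtx m -> vtx m -> nat -> Prop :=
| walk0 u : valid n u -> walk n u u 0
| walkS u w v k : adj n u w -> walk n w v k -> walk n u v k.+1.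

Definition dist (n m : nat) (u v : vtx m) (k : nat) : Prop :=
  walk n u v k /\ forall k', walk n u v k' -> (k <= k')%N.

Definition zero_v (m : nat) : vtx m := [ffun => 0].

(* vertex with prescribed middle coordinates mid (for 1 <= i <= m), end
   coordinate u_0 = a mod n, and u_{m+1} determined by the sum condition *)
Definition mk_v (n m : nat) (a : int) (mid : nat -> int) : vtx m :=
  let u0 := (a %% n%:Z)%Z in
  let s := \sum_(1 <= i < m.+1) mid i in
  [ffun j : 'I_m.+2 =>
     if val j == 0%N then u0
     else if val j == m.+1 then ((- (u0 + s)) %% n%:Z)%Z
     else mid (val j)].

Definition u0v (n m : nat) : vtx m :=
  mk_v n m (- ((m - n)./2)%:Z) (fun _ => 1).

(* u^(1): as u^(0) but u_{ceil((m+1)/2)} = 0; ceil((m+1)/2) = (m+2)./2 *)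
Definition u1v (n m : nat) : vtx m :=
  mk_v n m (- ((m - n)./2)%:Z)
       (fun i => if i == (m.+2)./2 then 0 else 1).

(* Read a vertex u through its height function H_u(i) = u_0 + ... + u_i (0 <= i <= m),
   with u_0 taken as its representative in [0, n).  Along an edge H_u changes at exactly
   one index by +-1, up to a global shift by a multiple of n caused by the wrap-around
   in u_0; hence d(u, 0) >= min_k sum_i |H_u(i) - k n|.  Conversely every 1-Lipschitz
   h : [0, m] -> Z is, up to a multiple of n, the height function of a vertex, and
   moving an entry of maximal |h(i)| one step towards 0 keeps h 1-Lipschitz, so 0 is
   reached in sum_i |h(i)| steps.  For u^(0) (resp. u^(1)) a height function is i - F
   (resp. the same with one value repeated), F = floor((m+n)/2).  Then
   sum_i |h(i) - k n| is a sum of distances to a point; F lies within n/2 of the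
   median, so k = 0 is optimal, and the value at k = 0 is the stated sum of binomials. *)

From mathcomp Require Import all_boot all_order all_algebra.
From mathcomp Require Import zify ring.
Set Implicit Arguments. Unset Strict Implicit. Unset Printing Implicit Defensive.
Import Order.TTheory GRing.Theory Num.Theory.
Local Open Scope ring_scope.

Lemma eq_modzP (x y d : int) :
  (x %% d)%Z = (y %% d)%Z <-> exists k : int, x = y + k * d.
Proof.
split=> [e | [k ->]]; last by rewrite addrC modzMDl.
exists ((x %/ d)%Z - (y %/ d)%Z).
move: (divz_eq x d) (divz_eq y d); rewrite e.
move: (x %/ d)%Z (y %/ d)%Z (y %% d)%Z => qx qy r -> ->; ring.
Qed.

Lemma sum_nat_update (V : zmodType) (f g : nat -> V) N i : (i < N)%N ->
  (forall j, j != i -> g j = f j) ->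
  \sum_(0 <= j < N) f j = \sum_(0 <= j < N) g j + (f i - g i).
Proof.
move=> ltiN gf; have iN : i \in index_iota 0 N by rewrite mem_index_iota.
rewrite !(bigD1_seq i iN (iota_uniq _ _)) /=.
rewrite [X in _ = _ + X + _](eq_bigr f) => [|j /gf //].
by rewrite [RHS]addrC addrA subrK.
Qed.

Lemma partial_sum_bump (V : zmodType) (a b : nat -> V) (c d : V) (i0 m : nat) :
  (forall j, (j <= m)%N -> a j = b j + (if j == 0%N then c else 0)
                                + (if j == i0 then d else 0) - (if j == i0.+1 then d else 0)) ->
  forall i, (i <= m)%N ->
  \sum_(0 <= j < i.+1) a j = \sum_(0 <= j < i.+1) b j + c + (if i == i0 then d else 0).
Proof.
move=> ab; elim=> [|i IH] le_im; first by rewrite !big_nat1 ab //=; case: eqP; rewrite !subr0.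
rewrite big_nat_recr //= [in RHS]big_nat_recr //= (IH (ltnW le_im)) ab // eqSS /=.
by rewrite addr0 addrAC -addrA subrK addrACA addrA.
Qed.

Lemma sum_nat_repeat (V : zmodType) (g : int -> V) c d : (0 < c)%N ->
  \sum_(0 <= i < (c + d).+1) g (if (i < c)%N then i%:Z else i%:Z - 1)
  = \sum_(0 <= i < c + d) g i%:Z + g (c%:Z - 1).
Proof.
move=> c0; elim: d => [|d IH].
  rewrite addn0 big_nat_recr //= ltnn; congr (_ + _).
  by apply: eq_big_nat => i /andP[_ ->].
rewrite big_nat_recr //= addnS IH big_nat_recr //= ifF; last lia.
by rewrite -addn1 PoszD addrK addrAC.
Qed.

Definition coord m (u : vtx m) (j : nat) : int :=
  if (j < m.+2)%N then u (inord j) else 0.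

Definition height m (u : vtx m) (i : nat) : int := \sum_(0 <= j < i.+1) coord u j.

Lemma coordE m (u : vtx m) j : (j < m.+2)%N -> coord u j = u (inord j).
Proof. by rewrite /coord => ->. Qed.

Lemma height0 m (u : vtx m) : height u 0 = coord u 0.
Proof. by rewrite /height big_nat1. Qed.

Lemma heightS m (u : vtx m) i : height u i.+1 = height u i + coord u i.+1.
Proof. by rewrite /height big_nat_recr. Qed.

Lemma height_zero m i : height (zero_v m) i = 0.
Proof. by rewrite /height big1 // => j _; rewrite /coord ffunE; case: ifP. Qed.

Lemma adj_coord n m (u w : vtx m) : adj n u w ->
  exists (i0 : nat) (dl t : int), [/\ (i0 <= m)%N, dl = 1 \/ dl = -1 &
    forall j, (j <= m)%N -> coord u j = coord w j + (if j == 0%N then t * n%:Z else 0)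
                 + (if j == i0 then dl else 0) - (if j == i0.+1 then dl else 0)].
Proof.
move=> [_ [_ [i [le_im [fix_uw step]]]]].
have {step} [dl [dl1 step_i step_i1]] : exists dl : int, [/\ dl = 1 \/ dl = -1,
    forall j : 'I_m.+2, val j = i -> ceq n j (u j) (w j + dl) &
    forall j : 'I_m.+2, val j = i.+1 -> ceq n j (u j) (w j - dl)].
  case: step => [[s1 s2] | [s1 s2]]; first by exists 1; split; [left | |].
  by exists (-1); split=> //; right.
have val_inord j : (j <= m.+1)%N -> val (inord j : 'I_m.+2) = j by exact: inordK.
have [t [t0 coord_i]] : exists t : int,
    (i != 0%N -> t = 0) /\ coord u i = coord w i + dl + t * n%:Z.
  move: (step_i (inord i) (val_inord i (leqW le_im))).
  rewrite /ceq /is_end !coordE ?val_inord //; try lia.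
  case: (i =P 0%N) => [-> | i0] /=.
    by move/eq_modzP=> [t ->]; exists t.
  by rewrite ifF; [move=> ->; exists 0; rewrite mul0r addr0 | lia].
have coord_i1 : (i < m)%N -> coord u i.+1 = coord w i.+1 - dl.
  move=> lt_im; move: (step_i1 (inord i.+1) (val_inord i.+1 le_im)).
  by rewrite /ceq /is_end !coordE ?val_inord //= ifF //; lia.
have coord_j j : (j <= m)%N -> j != i -> j != i.+1 -> coord u j = coord w j.
  move=> le_jm ji ji1; rewrite !coordE; try lia.
  by apply: fix_uw; rewrite val_inord //; lia.
exists i, dl, t; split=> // j le_jm.
case: (j =P i) => [-> | ji].
  rewrite coord_i (ltn_eqF (ltnSn i)).
  by case: eqP => [i0 | /eqP/t0 ->]; rewrite ?mul0r; ring.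
case: (j =P i.+1) => [ji1 | ji1].
  by rewrite ji1 coord_i1 ?addr0 //; lia.
rewrite coord_j //; [|exact/eqP|exact/eqP].
case: (j =P 0%N) => [j0 | _]; last by ring.
by rewrite t0 ?mul0r; [ring | apply/eqP; lia].
Qed.

Lemma adj_height n m (u w : vtx m) : adj n u w ->
  exists (i0 : nat) (dl t : int), [/\ (i0 <= m)%N, dl = 1 \/ dl = -1 &
    forall i, (i <= m)%N -> height u i = height w i + t * n%:Z + (if i == i0 then dl else 0)].
Proof.
move=> /adj_coord [i0 [dl [t [le_i0m dl1 coord_uw]]]].
by exists i0, dl, t; split=> // i; apply: partial_sum_bump.
Qed.

Lemma walk_height_lb n m (u v : vtx m) K : walk n u v K ->
  exists k : int, \sum_(0 <= i < m.+1) `|height u i - height v i - k * n%:Z| <= K%:Z.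
Proof.
elim=> {u v K} [u _ | u w v K uw _ [k IH]].
  by exists 0; rewrite big1 // => i _; rewrite mul0r !subrr normr0.
have [i0 [dl [t [le_i0m dl1 hu]]]] := adj_height uw.
exists (k + t).
have bump : \sum_(0 <= i < m.+1) `|height u i - height v i - (k + t) * n%:Z| <=
    \sum_(0 <= i < m.+1) (`|height w i - height v i - k * n%:Z| + (if i == i0 then 1 else 0)).
  apply: ler_sum_nat => i /andP[_ lt_im]; rewrite hu //.
  by case: eqP => _; case: dl1 => dlE; lia.
apply: le_trans bump _.
rewrite big_split /= -big_mkcond big_nat1_eq /= ifT; last lia.
by rewrite -[K.+1]addn1 PoszD lerD2r.
Qed.

Definition lipschitz1 m (h : nat -> int) :=
  forall j, (0 < j <= m)%N -> `|h j - h j.-1| <= 1.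

Definition vtx_of_height n m (h : nat -> int) : vtx m :=
  [ffun j : 'I_m.+2 => if val j == 0%N then (h 0%N %% n%:Z)%Z
                       else if val j == m.+1 then (- h m %% n%:Z)%Z
                       else h j - h j.-1].

Lemma valid_vtx_of_height n m h : (0 < n)%N -> lipschitz1 m h ->
  valid n (vtx_of_height n m h).
Proof.
move=> n0 lip_h; split=> [[j lt_j] | ].
  rewrite ffunE /is_end /=; case: (j =P 0%N) => [_ | j0] /=.
    by split; [apply: modz_ge0 | apply: ltz_pmod]; lia.
  case: (j =P m.+1) => [_ | jm] /=.
    by split; [apply: modz_ge0 | apply: ltz_pmod]; lia.
  have /lip_h : (0 < j <= m)%N by lia.
  move: (h j - h j.-1) => x x1; have : x = -1 \/ x = 0 \/ x = 1 by lia.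
  by case=> [-> | [-> | ->]].
pose F j := if j == 0%N then (h 0%N %% n%:Z)%Z
            else if j == m.+1 then (- h m %% n%:Z)%Z else h j - h j.-1.
rewrite (eq_bigr (fun j : 'I_m.+2 => F (val j))) => [|j _]; last by rewrite ffunE.
rewrite -(big_mkord xpredT F) big_nat_recr //= big_nat_recl //.
rewrite (eq_big_nat _ _ (F2 := fun i => h i.+1 - h i)) => [|i lt_im]; last first.
  by rewrite /F /= ifF //; lia.
rewrite telescope_sumr // /F /= eqxx -(mod0z n%:Z); apply/eq_modzP.
by exists (- (h 0%N %/ n%:Z)%Z - (- h m %/ n%:Z)%Z); rewrite /modz; ring.
Qed.

Lemma coord_vtx_of_height n m h j : (j <= m)%N ->
  coord (vtx_of_height n m h) j = if j == 0%N then (h 0%N %% n%:Z)%Z else h j - h j.-1.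
Proof.
move=> le_jm; rewrite coordE ?ffunE /=; last lia.
rewrite inordK; last lia.
by have -> : (j == m.+1) = false by lia.
Qed.

Lemma height_vtx_of_height n m h i : (i <= m)%N ->
  height (vtx_of_height n m h) i = h i - (h 0%N %/ n%:Z)%Z * n%:Z.
Proof.
elim: i => [|i IH] le_im.
  by rewrite height0 coord_vtx_of_height //=.
rewrite heightS IH ?coord_vtx_of_height //=; last exact: ltnW.
by rewrite addrC subrKA.
Qed.

Lemma mk_v_vtx_of_height n m (a : int) (mid : nat -> int) (h : nat -> int) :
  (h 0%N %% n%:Z = a %% n%:Z)%Z -> (forall j, (0 < j <= m)%N -> h j - h j.-1 = mid j) ->
  mk_v n m a mid = vtx_of_height n m h.
Proof.
move=> h0a hmid; have /eq_modzP [k h0E] := h0a.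
have hm : h m = h 0%N + \sum_(1 <= i < m.+1) mid i.
  rewrite big_add1 /= (eq_big_nat _ _ (F2 := fun i => h i.+1 - h i)) => [|i /andP[_ lt_im]].
    by rewrite telescope_sumr // addrC subrK.
  by rewrite -hmid //; lia.
apply/ffunP=> -[j lt_j]; rewrite !ffunE /=.
case: (j =P 0%N) => [_ | j0] /=; first by rewrite h0a.
case: (j =P m.+1) => [_ | jm] /=; last by rewrite hmid //; lia.
apply/eq_modzP; exists (k + (a %/ n%:Z)%Z).
by rewrite hm h0E /modz; ring.
Qed.

Lemma adj_vtx_of_height n m h h' i (dl : int) :
  (0 < n)%N -> lipschitz1 m h -> lipschitz1 m h' -> (i <= m)%N -> dl = 1 \/ dl = -1 ->
  (forall j, j != i -> h' j = h j) -> h' i = h i - dl ->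
  adj n (vtx_of_height n m h) (vtx_of_height n m h').
Proof.
move=> n0 lip_h lip_h' le_im dl1 hh' hh'i.
split; first exact: valid_vtx_of_height.
split; first exact: valid_vtx_of_height.
exists i; split=> //; split.
  move=> [j lt_j] /= ji ji1; rewrite !ffunE /=.
  case: (j =P 0%N) => [j0 | j0] /=; first by rewrite hh' //; apply/eqP; lia.
  case: (j =P m.+1) => [jm | jm] /=; first by rewrite hh' //; apply/eqP; lia.
  by rewrite !hh' //; apply/eqP; lia.
have step_i : forall j : 'I_m.+2, val j = i ->
    ceq n j (vtx_of_height n m h j) (vtx_of_height n m h' j + dl).
  move=> [j lt_j] /= ji; rewrite /ceq /is_end !ffunE /= ji.
  case: (i =P 0%N) => [i0 | i0] /=.
    rewrite i0 in hh'i; apply/eq_modzP.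
    by exists ((h' 0%N %/ n%:Z)%Z - (h 0%N %/ n%:Z)%Z); rewrite /modz hh'i; ring.
  have -> /= : (i == m.+1) = false by lia.
  by rewrite hh'i hh' ?subrK //; apply/eqP; lia.
have step_i1 : forall j : 'I_m.+2, val j = i.+1 ->
    ceq n j (vtx_of_height n m h j) (vtx_of_height n m h' j - dl).
  move=> [j lt_j] /= ji; rewrite /ceq /is_end !ffunE /= ji.
  case: (i =P m) => [im | im] /=.
    rewrite im eqxx in hh'i *; apply/eq_modzP.
    by exists ((- h' m %/ n%:Z)%Z - (- h m %/ n%:Z)%Z); rewrite /modz hh'i; ring.
  have -> /= : (i.+1 == m.+1) = false by lia.
  by rewrite hh'i (hh' i.+1) //; [ring | apply/eqP; lia].
by case: dl1 => dlE; [left | right]; rewrite dlE ?opprK in step_i step_i1.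
Qed.

Definition shrink_at (h : nat -> int) (i : nat) : nat -> int :=
  fun j => if j == i then h i - Num.sg (h i) else h j.

Lemma lipschitz1_shrink_at m h i : lipschitz1 m h ->
  (forall j, (j <= m)%N -> `|h j| <= `|h i|) -> lipschitz1 m (shrink_at h i).
Proof.
move=> lip_h imax j /[dup] /lip_h hj /andP[j0 le_jm]; rewrite /shrink_at.
have := imax j le_jm; have := imax j.-1 (leq_trans (leq_pred j) le_jm).
by case: (j =P i) => [ji | ji]; case: (j.-1 =P i) => [ji' | ji'] //=; subst; lia.
Qed.

Lemma sum_abs_shrink_at m h i : (i <= m)%N -> h i != 0 ->
  \sum_(0 <= j < m.+1) `|shrink_at h i j| = \sum_(0 <= j < m.+1) `|h j| - 1.
Proof.
move=> le_im hi0.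
rewrite (@sum_nat_update _ (fun j => `|h j|) (fun j => `|shrink_at h i j|) _ i) //.
  rewrite {3}/shrink_at eqxx; move/eqP: hi0.
  by move: (\sum_(_ <= _ < _) _) (h i) => S x; lia.
by move=> j /negbTE ji; rewrite /shrink_at ji.
Qed.

Lemma vtx_of_height_eq0 n m h : (forall j, (j <= m)%N -> h j = 0) ->
  vtx_of_height n m h = zero_v m.
Proof.
move=> h0; apply/ffunP=> -[j lt_j]; rewrite !ffunE /=.
case: (j =P 0%N) => [_ | j0]; first by rewrite h0 ?mod0z.
case: (j =P m.+1) => [_ | jm]; first by rewrite h0 ?oppr0 ?mod0z.
by rewrite !h0 ?subrr //; lia.
Qed.

Lemma walk_vtx_of_height_zero n m h (N : nat) : (0 < n)%N -> lipschitz1 m h ->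
  \sum_(0 <= i < m.+1) `|h i| = N%:Z -> walk n (vtx_of_height n m h) (zero_v m) N.
Proof.
move=> n0; elim: N h => [|N IH] h lip_h sumN.
  have sum0 : \sum_(i < m.+1) `|h i| = 0.
    by rewrite -(big_mkord xpredT (fun i => `|h i|)) sumN.
  have h0 j : (j <= m)%N -> h j = 0.
    move=> le_jm; have /= := psumr_eq0P (fun (i : 'I_m.+1) _ => normr_ge0 (h i)) sum0.
    by move/(_ (Ordinal (le_jm : (j < m.+1)%N)) isT) => /= hj0; lia.
  by have := valid_vtx_of_height n0 lip_h; rewrite vtx_of_height_eq0 //; exact: walk0.
have [i _ imax] := @arg_maxnP _ (ord0 : 'I_m.+1) xpredT (fun i => `|h i|%N) isT.
have {}imax j : (j <= m)%N -> `|h j| <= `|h i|.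
  by move=> le_jm; have /= := imax (Ordinal (le_jm : (j < m.+1)%N)) isT; lia.
have hi0 : h i != 0.
  apply: contraPneq sumN => hi0; rewrite big1_seq ?ltr0Sn // => j.
  by rewrite mem_index_iota /= => le_jm; have := imax j le_jm; rewrite hi0; lia.
have le_im : (i <= m)%N by rewrite -ltnS.
apply: (walkS (w := vtx_of_height n m (shrink_at h i))).
  apply: (adj_vtx_of_height (i := i) (dl := Num.sg (h i))) => //.
  - exact: lipschitz1_shrink_at.
  - by lia.
  - by move=> j /negbTE ji; rewrite /shrink_at ji.
  - by rewrite /shrink_at eqxx.
apply: IH; first exact: lipschitz1_shrink_at.
by rewrite sum_abs_shrink_at // sumN; lia.
Qed.

Lemma dist_vtx_of_height n m h (N : nat) : (0 < n)%N -> lipschitz1 m h ->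
  \sum_(0 <= i < m.+1) `|h i| = N%:Z ->
  (forall c : int, N%:Z <= \sum_(0 <= i < m.+1) `|h i - c * n%:Z|) ->
  dist n (vtx_of_height n m h) (zero_v m) N.
Proof.
move=> n0 lip_h sumN hmin; split; first exact: walk_vtx_of_height_zero.
move=> K /walk_height_lb [k].
rewrite (eq_big_nat _ _ (F2 := fun i => `|h i - ((h 0%N %/ n%:Z)%Z + k) * n%:Z|)).
  by move/(le_trans (hmin _)); rewrite lez_nat.
by move=> i /andP[_ lt_im]; rewrite height_vtx_of_height // height_zero; congr `|_|; ring.
Qed.

Definition absdev (N : nat) (b : int) : int := \sum_(0 <= i < N) `|i%:Z + b|.

Lemma absdevS N b : absdev N (b + 1) = absdev N b + `|N%:Z + b| - `|b|.
Proof.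
rewrite /absdev; apply: (addrI `|b|).
have shiftl : \sum_(0 <= i < N.+1) `|i%:Z + b| = `|b| + \sum_(0 <= i < N) `|i%:Z + (b + 1)|.
  by rewrite big_nat_recl // add0r; congr (_ + _); apply: eq_big_nat => i _; lia.
rewrite -shiftl big_nat_recr //=; ring.
Qed.

Lemma absdev_sym N b : absdev N b = absdev N (1 - N%:Z - b).
Proof.
rewrite /absdev big_nat_rev /=; apply: eq_big_nat => i /andP[_ lt_iN].
by rewrite add0n; lia.
Qed.

Lemma absdev_mono N b b' : 0 <= 2 * b + N%:Z - 1 -> b <= b' -> absdev N b <= absdev N b'.
Proof.
move=> hb le_bb'; have [d ->] : exists d : nat, b' = b + d%:Z by exists `|b' - b|%N; lia.
elim: d {le_bb'} => [|d IH]; first by rewrite addr0.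
apply: le_trans IH _; rewrite -addn1 PoszD addrA absdevS.
by move: (absdev _ _) => A; lia.
Qed.

Lemma absdev_le N b b' : `|2 * b + N%:Z - 1| <= `|2 * b' + N%:Z - 1| ->
  absdev N b <= absdev N b'.
Proof.
have fold_center x : exists y, [/\ absdev N x = absdev N y, 0 <= 2 * y + N%:Z - 1 &
    `|2 * y + N%:Z - 1| = `|2 * x + N%:Z - 1|].
  case: (lerP 0 (2 * x + N%:Z - 1)) => hx; first by exists x.
  by exists (1 - N%:Z - x); rewrite -absdev_sym; split=> //; lia.
move=> le_bb'; have [y [-> hy ey]] := fold_center b; have [y' [-> hy' ey']] := fold_center b'.
by apply: absdev_mono => //; lia.
Qed.

Lemma absdev_oppn P : absdev P.+1 (- P%:Z) = 'C(P + 1, 2)%:Z.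
Proof.
elim: P => [|P IH]; first by rewrite /absdev big_nat1 subrr normr0 bin_small.
rewrite /absdev big_nat_recl // (eq_big_nat _ _ (F2 := fun i => `|i%:Z + - P%:Z|)).
  by rewrite -/(absdev _ _) IH !addn1 [in RHS]binS bin1; lia.
by move=> i _; lia.
Qed.

Lemma absdev_oppn_add P Q : absdev (P + Q).+1 (- P%:Z) = 'C(P + 1, 2)%:Z + 'C(Q + 1, 2)%:Z.
Proof.
elim: Q => [|Q IH]; first by rewrite addn0 absdev_oppn [X in _ + X%:Z]bin_small // addr0.
rewrite /absdev big_nat_recr //= -/(absdev _ _) addnS IH.
by rewrite !addn1 (binS Q.+1 1) bin1; lia.
Qed.

Lemma mulz_nat_ge0_or_le_oppn (c : int) (n : nat) : 0 <= c * n%:Z \/ c * n%:Z <= - n%:Z.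
Proof. by case: (lerP 0 c) => hc; [left | right]; nia. Qed.

Lemma dist_u0v n m : (1 < n)%N -> (n <= m)%N ->
  dist n (u0v n m) (zero_v m) ('C((m + n)./2 + 1, 2) + 'C(uphalf (m - n) + 1, 2))%N.
Proof.
move=> n1 le_nm; rewrite /u0v.
move eF : (m + n)./2 => F; move eg : (uphalf (m - n)) => g; move ef : ((m - n)./2) => f.
pose h j := j%:Z - F%:Z.
have sum_h : absdev m.+1 (- F%:Z) = ('C(F + 1, 2) + 'C(g + 1, 2))%N%:Z.
  by rewrite (_ : m = F + g) ?absdev_oppn_add //; lia.
have -> : mk_v n m (- f%:Z) (fun _ => 1) = vtx_of_height n m h.
  apply: mk_v_vtx_of_height => [| j /andP[j0 _]]; last by rewrite /h; lia.
  by apply/eq_modzP; exists (-1); rewrite /h; lia.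
apply: (dist_vtx_of_height _ _ sum_h); [lia | by move=> j _; rewrite /h; lia |].
move=> c; rewrite -sum_h (_ : \sum_(0 <= i < m.+1) _ = absdev m.+1 (- F%:Z - c * n%:Z)).
  by apply: absdev_le; case: (mulz_nat_ge0_or_le_oppn c n); lia.
by apply: eq_big_nat => i _; rewrite /h; congr `|_|; ring.
Qed.

Lemma dist_u1v n m : (1 < n)%N -> (n < m)%N -> odd (m - n) ->
  exists N : nat, dist n (u1v n m) (zero_v m) N /\
    N%:Z = ('C(uphalf (m + n) + 1, 2) + 'C((m - n)./2 + 1, 2))%:Z - ((m.+2)./2)%:Z.
Proof.
move=> n1 lt_nm odd_mn; rewrite /u1v.
move eF : (m + n)./2 => F; move ec : (m.+2)./2 => c; move ef : ((m - n)./2) => f.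
have c0 : (0 < c)%N by lia.
pose h j := (if (j < c)%N then j%:Z else j%:Z - 1) - F%:Z.
have sum_h_shift b : \sum_(0 <= i < m.+1) `|h i - b|
    = absdev m (- F%:Z - b) + `|c%:Z - 1 - F%:Z - b|.
  have := sum_nat_repeat (fun x => `|x + (- F%:Z - b)|) (m - c) c0.
  rewrite subnKC => [repeatE|]; last lia.
  rewrite (eq_big_nat _ _
    (F2 := fun i => `|(if (i < c)%N then i%:Z else i%:Z - 1) + (- F%:Z - b)|)).
    by rewrite repeatE; congr (_ + _); congr `|_|; ring.
  by move=> i _; rewrite /h; congr `|_|; ring.
have sum_h : absdev m (- F%:Z) + `|c%:Z - 1 - F%:Z|
    = ('C(F + 1, 2) + 'C(f + 1, 2) + (F + 1 - c))%N%:Z.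
  by rewrite (_ : m = (F + f).+1) ?absdev_oppn_add //; lia.
exists ('C(F + 1, 2) + 'C(f + 1, 2) + (F + 1 - c))%N; split; last first.
  rewrite (_ : (uphalf (m + n) + 1 = F.+2)%N); last lia.
  by rewrite (binS F.+1 1) bin1 !addn1; lia.
have -> : mk_v n m (- f%:Z) (fun i => if i == c then 0 else 1) = vtx_of_height n m h.
  apply: mk_v_vtx_of_height => [| j /andP[j0 le_jm]].
    by apply/eq_modzP; exists (-1); rewrite /h c0; lia.
  by rewrite /h; case: (j =P c) => [->|jc]; case: ifP; case: ifP; lia.
apply: dist_vtx_of_height; [lia | | |].
- by move=> j _; rewrite /h; case: ifP; case: ifP; lia.
- rewrite -sum_h (eq_big_nat _ _ (F2 := fun i => `|h i - 0|)) => [|i _].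
    by rewrite sum_h_shift !subr0.
  by rewrite subr0.
move=> K; rewrite -sum_h sum_h_shift; apply: lerD.
  by apply: absdev_le; case: (mulz_nat_ge0_or_le_oppn K n); lia.
by case: (mulz_nat_ge0_or_le_oppn K n); lia.
Qed.

Theorem lemma5p22 (n m : nat) (hn : (1 < n)%N) (hnm : (n <= m)%N) :
  dist n (u0v n m) (zero_v m)
    ('C((m + n)./2 + 1, 2) + 'C(uphalf (m - n) + 1, 2))%N /\
  ((n < m)%N -> odd (m - n) ->
   exists N : nat, dist n (u1v n m) (zero_v m) N /\
     N%:Z = ('C(uphalf (m + n) + 1, 2) + 'C((m - n)./2 + 1, 2))%:Z
            - ((m.+2)./2)%:Z).
Proof. by split=> [|lt_nm odd_mn]; [exact: dist_u0v | exact: dist_u1v]. Qed.
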